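(* Let $G$ be a $k$-connected cograph on $n$ vertices with cotree $T$, let $w_1,\ldots,w_t$ be the children of the root of $T$, and let $G_i$ be the subgraph induced by the leaves of the subtree rooted at $w_i$. For every $i$ with $|V(G_i)|=n-k$, let $x_i\in V(G_i)$ be a vertex minimizing $|\overline{N}_G(x_i)|$. Then every set $E_{ca}\subseteq E(\overline{G})$ such that $G\cup E_{ca}$ is a $(k+1)$-connected cograph satisfies $|E_{ca}|\geq \sum_{i:\,|V(G_i)|=n-k}|\overline{N}_G(x_i)|$.
   Context: A cograph is a graph that can be built from single vertices by repeatedly taking disjoint unions (label 0) and joins (label 1); equivalently a graph with no induced path on four vertices. The cotree of a cograph is the unique rooted tree whose leaves are the vertices, internal nodes labelled 0/1 with at least two children and labels alternating along root-to-leaf paths, two vertices being adjacent iff their lowest common ancestor is labelled 1; for connected cographs the root is labelled 1. $\overline{G}$ is the complement of $G$, $\overline{N}_G(v)=\{u:\{u,v\}\in E(\overline{G})\}$, and $G\cup F$ is the graph $(V(G),E(G)\cup F)$. A vertex separator of a connected graph is a set whose removal disconnects it; minimal if no proper subset is a vertex separator; a minimum vertex separator is a minimal one of least size. The paper calls a graph $k$-connected if there exists a minimum vertex separator of size $k$. *)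

(* Simple graphs on a finite vertex type T given by a
   symmetric irreflexive boolean relation e. *)
From mathcomp Require Import all_boot.
Set Implicit Arguments. Unset Strict Implicit. Unset Printing Implicit Defensive.

Section Graphs.
Variable T : finType.

Definition compl (e : rel T) : rel T := fun x y => (x != y) && ~~ e x y.

Definition cnbr (e : rel T) (v : T) : {set T} := [set u | compl e v u].

(* G \cup F, F a set of (unordered) edges, each a 2-element vertex set *)
Definition gunion (e : rel T) (F : {set {set T}}) : rel T :=
  fun x y => e x y || ([set x; y] \in F).

Definition compl_edges (e : rel T) (F : {set {set T}}) : Prop :=
  forall f, f \in F -> exists x y, f = [set x; y] /\ compl e x y.

Definition cograph (e : rel T) : Prop :=
  forall a b c d : T, uniq [:: a; b; c; d] ->
    ~ [&& e a b, e b c, e c d, ~~ e a c, ~~ e b d & ~~ e a d].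

Definition gconnected (e : rel T) : Prop := forall u v, connect e u v.

Definition del (e : rel T) (S : {set T}) : rel T :=
  fun x y => [&& e x y, x \notin S & y \notin S].

Definition vsep (e : rel T) (S : {set T}) : Prop :=
  exists u v, [/\ u \notin S, v \notin S & ~~ connect (del e S) u v].

Definition minimal_vsep (e : rel T) (S : {set T}) : Prop :=
  vsep e S /\ forall S' : {set T}, S' \proper S -> ~ vsep e S'.

Definition minimum_vsep (e : rel T) (S : {set T}) : Prop :=
  minimal_vsep e S /\ forall S' : {set T}, minimal_vsep e S' -> #|S| <= #|S'|.

(* the paper's "k-connected": connected and has a minimum vertex separator of size k *)
Definition k_connected (e : rel T) (k : nat) : Prop :=
  gconnected e /\ exists S, minimum_vsep e S /\ #|S| = k.

(* vertex sets of the graphs G_i induced by the children of the cotree root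
   of a connected cograph: the connected components of the complement *)
Definition cocomps (e : rel T) : {set {set T}} :=
  [set [set y | connect (compl e) x y] | x : T].

End Graphs.

From mathcomp Require Import all_boot zify.
From Stdlib Require Import Classical.
Set Implicit Arguments. Unset Strict Implicit. Unset Printing Implicit Defensive.

(* Let C be a cocomponent (vertex set of some G_i) with |C| = n - k >= 2 and let
   G' = G u F. The k vertices outside C do not separate G', so G'[C] is connected,
   and by Seinsche's theorem (a cograph on at least two vertices is disconnected
   or has a disconnected complement) the complement of G'[C] is disconnected.
   The edges of F inside C therefore contain an edge cut of the complement of
   G[C], which is a connected cograph and so has diameter at most 2. In such a
   graph every edge cut has at least as many edges as some vertex has
   neighbours, hence at least |N(x_C)| edges. Distinct cocomponents are
   disjoint, so these sets of edges are disjoint subsets of F. *)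

Section Connectivity.
Variable T : finType.
Implicit Types (r : rel T) (S C : {set T}).

Lemma connect_exit r (P : pred T) x y :
  connect r x y -> P x -> ~~ P y ->
  exists a b, [/\ connect r x a, r a b, P a & ~~ P b].
Proof.
case/connectP=> p + ->{y}; elim: p x => [|z p IH] x /=; first by move=> _ ->.
case/andP=> rxz pz Px nPy; case Pz: (P z).
  have [a [b [za rab Pa nPb]]] := IH z pz Pz nPy.
  by exists a, b; split=> //; apply: connect_trans (connect1 rxz) za.
by exists x, z; rewrite Pz.
Qed.

Lemma del_sym r S : symmetric r -> symmetric (del r S).
Proof. by move=> r_sym x y; rewrite /del r_sym [(x \notin S) && _]andbC. Qed.

Lemma connect_induced_in r C x y :
  connect (del r (~: C)) x y -> x \in C -> y \in C.
Proof.
have clC : closed (del r (~: C)) C.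
  by move=> a b /and3P[_]; rewrite !in_setC !negbK => -> ->.
by move/(closed_connect clC) => ->.
Qed.

Lemma connect_induced r C x y :
  (forall a b, a \in C -> r a b -> b \in C) ->
  x \in C -> connect r x y -> connect (del r (~: C)) x y.
Proof.
move=> clC + /connectP[p + ->{y}]; elim: p x => [|z p IH] x xC //=.
case/andP=> rxz pz; have zC := clC _ _ xC rxz.
by apply: connect_trans (connect1 _) (IH z zC pz); rewrite /del rxz !inE xC zC.
Qed.

Definition connected_on r C := {in C &, forall p q, connect (del r (~: C)) p q}.

Lemma connected_on_neighbor r C s t :
  connected_on r C -> s \in C -> t \in C -> s != t ->
  exists2 b, b \in C :\ s & r s b.
Proof.
move=> rC sC tC st; have nts : ~~ pred1 s t by rewrite /= eq_sym.
have [a [b [_ /and3P[rab _ bC] /eqP a_s nbs]]] :=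
  connect_exit (P := pred1 s) (rC s t sC tC) (eqxx s) nts.
exists b; last by rewrite -a_s.
by rewrite inE negbK in bC; rewrite !inE bC andbT.
Qed.

End Connectivity.

Section Cographs.
Variable T : finType.
Implicit Types (g : rel T) (C : {set T}).

Lemma compl_sym g : symmetric g -> symmetric (compl g).
Proof. by move=> g_sym x y; rewrite /compl eq_sym g_sym. Qed.

Lemma compl_irr g : irreflexive (compl g).
Proof. by move=> x; rewrite /compl eqxx. Qed.

Lemma complK g : irreflexive g -> compl (compl g) =2 g.
Proof.
by move=> g_irr x y; rewrite /compl; case: eqVneq => [->|] /=; rewrite ?negbK ?g_irr.
Qed.

Lemma complN g x y : compl g x y -> ~~ g x y.
Proof. by case/andP. Qed.

Lemma complNN g x y : x != y -> ~~ compl g x y -> g x y.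
Proof. by move=> xy; rewrite /compl xy negbK. Qed.

Section Cograph.
Variable g : rel T.
Hypotheses (g_sym : symmetric g) (g_irr : irreflexive g) (g_cog : cograph g).

(* The adjacency pattern alone forces the four vertices to be distinct. *)
Lemma cograph_noP4 a b c d :
  g a b -> g b c -> g c d -> ~~ g a c -> ~~ g b d -> ~~ g a d -> False.
Proof.
move=> gab gbc gcd nac nbd nad.
have neq x y : g x y -> x != y by apply: contraTneq => ->; rewrite g_irr.
have ac : a != c by apply: contraNneq nad => ->.
have ad : a != d by apply: contraNneq nac => ->; rewrite g_sym.
have bd : b != d by apply: contraNneq nad => <-.
apply: (g_cog (a := a) (b := b) (c := c) (d := d)).
  by rewrite /= !inE !negb_or (neq a b) // (neq b c) // (neq c d) // ac ad bd.
by rewrite gab gbc gcd nac nbd nad.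
Qed.

Lemma cograph_compl : cograph (compl g).
Proof.
move=> a b c d abcd /and5P[cab cbc ccd ncac /andP[ncbd ncad]].
move: abcd; rewrite /= !inE !negb_or => /and4P[/and3P[_ ac ad] /andP[_ bd] _ _].
apply: (@cograph_noP4 b d a c); first exact: complNN ncbd.
- by rewrite g_sym complNN.
- exact: complNN ncac.
- by rewrite g_sym complN.
- by rewrite g_sym complN.
- exact: complN cbc.
Qed.

Lemma cograph_connect_le2 a b : connect g a b ->
  [\/ a = b, g a b | exists2 z, g a z & g z b].
Proof.
case/connectP=> p + ->{b}; elim: p a => [|c p IH] a /=; first by constructor.
case/andP=> gac /IH[<-|gcb|[z gcz gzb]]; first by constructor 2.
  by constructor 3; exists c.
set b := last c p in gzb *.
case gab: (g a b); first by constructor 2.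
case gaz: (g a z); first by constructor 3; exists z.
case gcb: (g c b); first by constructor 3; exists c.
by exfalso; apply: (cograph_noP4 gac gcz gzb); rewrite ?gaz ?gcb ?gab.
Qed.

Lemma connected_on_setD1 C s : s \in C ->
  connected_on g C -> connected_on (compl g) C -> connected_on g (C :\ s).
Proof.
move=> sC gC cC u v; set C' := C :\ s; move=> uC' vC'; apply: contraT => nuv.
have C'C : {subset C' <= C} by move=> y /setD1P[].
set g' := del g (~: C').
have g'_sym : connect_sym g' := sym_connect_sym (del_sym _ g_sym).
have g'E y y' : y \in C' -> y' \in C' -> g y y' -> g' y y'.
  by move=> yC' y'C' gyy'; rewrite /g' /del gyy' !in_setC !negbK yC' y'C'.
have nbr_s z : z \in C' -> exists2 a, connect g' z a & g s a.
  move=> zC'; have nzs : ~~ connect g' z s.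
    by apply/negP => /connect_induced_in/(_ zC'); rewrite setD11.
  have [a [b [_ /and3P[gab _ bC] za nzb]]] :=
    connect_exit (P := connect g' z) (gC z s (C'C z zC') sC) (connect0 _ z) nzs.
  exists a => //; case: (eqVneq b s) => [<-|bs]; first by rewrite g_sym.
  have bC' : b \in C' by rewrite in_setC negbK in bC; rewrite !inE bs.
  have g'ab := g'E a b (connect_induced_in za zC') bC' gab.
  by rewrite (connect_trans za (connect1 g'ab)) in nzb.
have [w wC' nsw] : exists2 w, w \in C' & ~~ g s w.
  have sv : s != v by rewrite eq_sym; case/setD1P: vC'.
  have [w wC' csw] := connected_on_neighbor cC sC (C'C v vC') sv.
  by exists w => //; apply: complN csw.
have [z zC' nwz] : exists2 z, z \in C' & ~~ connect g' w z.
  case: (boolP (connect g' w u)) => wu; last by exists u.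
  by exists v => //; apply: contra nuv; apply: connect_trans; rewrite g'_sym.
have [a1 wa1 sa1] := nbr_s w wC'.
have a1w : connect g' a1 w by rewrite g'_sym.
have [a [b [a1a g'ab sa nsb]]] := connect_exit (P := g s) a1w sa1 nsw.
have [c zc sc] := nbr_s z zC'.
have wa := connect_trans wa1 a1a.
have wb := connect_trans wa (connect1 g'ab).
have nc y : connect g' w y -> ~~ g y c.
  move=> wy; apply: contra nwz => gyc.
  have g'yc := g'E y c (connect_induced_in wy wC') (connect_induced_in zc zC') gyc.
  by rewrite g'_sym in zc; apply: connect_trans (connect_trans wy (connect1 g'yc)) zc.
(* [b - a - s - c] is an induced P4: [a] and [b] lie in the component of [w]
   in [C :\ s], and [c] in that of [z]. *)
case/and3P: g'ab => gab _ _; exfalso.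
by apply: (@cograph_noP4 b a s c) (nc a wa) (nc b wb); rewrite // g_sym.
Qed.

End Cograph.

Lemma cograph_connected_on_compl_le1 g C :
  symmetric g -> irreflexive g -> cograph g ->
  connected_on g C -> connected_on (compl g) C -> #|C| <= 1.
Proof.
move=> g_sym g_irr g_cog.
elim: {C}_.+1 {-2}C (ltnSn #|C|) => // n IH C ltCn gC cC.
rewrite leqNgt; apply/negP => C2.
have /card_gt0P[s sC] : 0 < #|C| by apply: ltnW.
have cardC : #|C| = #|C :\ s|.+1 by rewrite (cardsD1 s C) sC.
have ccgC : connected_on (compl (compl g)) C.
  move=> p q pC qC; rewrite (eq_connect (_ : _ =2 del g (~: C))); first exact: gC.
  by move=> x y; rewrite /del complK.
have C'le1 : #|C :\ s| <= 1.
  apply: IH; first by rewrite -ltnS -cardC.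
    exact: connected_on_setD1.
  apply: connected_on_setD1 ccgC => //;
    [exact: compl_sym | exact: compl_irr | exact: cograph_compl].
have /card_gt0P[t tC'] : 0 < #|C :\ s| by rewrite -ltnS -cardC.
have [st tC] : s != t /\ t \in C by case/setD1P: tC'; rewrite eq_sym.
have [b bC' gsb] := connected_on_neighbor gC sC tC st.
have [b' b'C' csb'] := connected_on_neighbor cC sC tC st.
by move: csb'; rewrite (card_le1_eqP C'le1 b b') // /compl gsb andbF.
Qed.

End Cographs.

Section EdgeCuts.
Variable T : finType.
Implicit Types (h : rel T) (C P Q : {set T}) (X : {set {set T}}).

Lemma card_nbhd_le_cut h P Q X y :
  [disjoint P & Q] -> y \in P -> ~~ h y y ->
  {subset [set z | h y z] <= P :|: Q} ->
  (forall p, p \in P -> exists2 q, q \in Q & h p q) ->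
  (forall p q, p \in P -> q \in Q -> h p q -> [set p; q] \in X) ->
  #|[set z | h y z]| <= #|X|.
Proof.
move=> PQ yP nhyy NPQ exQ cutX.
(* [endpoint] maps [X] onto the neighbourhood of [y]: a neighbour [z \in Q] comes
   from the cut edge [{y, z}], a neighbour [z \in P] from [{z, q}] with [q \in Q]. *)
pose endpoint (f : {set T}) := odflt y [pick z in if y \in f then f :\ y else f :&: P].
have QF z : z \in Q -> z \in P = false by move=> zQ; rewrite (disjointFl PQ zQ).
apply: leq_trans (leq_imset_card endpoint X); apply: subset_leq_card.
apply/subsetP => z Nz; have hyz : h y z by rewrite inE in Nz.
have /setUP[zP | zQ] := NPQ z Nz.
  have [q qQ hzq] := exQ z zP.
  have zy : z != y by apply: contraTneq hyz => ->.
  apply/imsetP; exists [set z; q]; first exact: cutX.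
  have yq : y != q by apply: contraTneq qQ => <-; rewrite (disjointFr PQ yP).
  rewrite /endpoint !inE eq_sym (negbTE zy) (negbTE yq) /=.
  suff -> : [set z; q] :&: P = [set z] by rewrite pick_set1.
  apply/setP => t; rewrite !inE; case: (eqVneq t z) => [->|_] /=; first by rewrite zP.
  by case: (eqVneq t q) => [->|//]; rewrite QF.
have zy : z != y by apply: contraTneq zQ => ->; rewrite (disjointFr PQ yP).
apply/imsetP; exists [set y; z]; first exact: cutX.
by rewrite /endpoint !inE eqxx setU1K ?pick_set1 // inE eq_sym.
Qed.

(* Either one side of the cut has all its vertices incident to cut edges, or two
   vertices on opposite sides without cut edges would be at distance 3. *)
Lemma cut_ge_degree_diam2 h C P X u v :
  symmetric h -> irreflexive h ->
  (forall y z, y \in C -> h y z -> z \in C) ->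
  {in C &, forall a b, [\/ a = b, h a b | exists2 z, h a z & h z b]} ->
  P \subset C -> u \in P -> v \in C :\: P ->
  (forall p q, p \in P -> q \in C :\: P -> h p q -> [set p; q] \in X) ->
  exists2 y, y \in C & #|[set z | h y z]| <= #|X|.
Proof.
move=> h_sym h_irr clC diam /subsetP PC uP vQ cutX; set Q := C :\: P.
have PQ : [disjoint P & Q] by rewrite disjoint_sym disjoints_subset /Q setDE subsetIr.
have NPQ y : y \in C -> {subset [set z | h y z] <= P :|: Q}.
  by move=> yC z; rewrite !inE => /(clC _ _ yC) ->; rewrite andbT orbN.
have vC : v \in C by case/setDP: vQ.
case: (boolP [forall p in P, exists q in Q, h p q]) => [/forall_inP PtoQ |].
  exists u; first exact: PC.
  apply: card_nbhd_le_cut PQ uP _ (NPQ u (PC u uP)) _ cutX; first by rewrite h_irr.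
  by move=> p /PtoQ/exists_inP.
case/forall_inPn => a aP /exists_inPn noQa.
case: (boolP [forall q in Q, exists p in P, h q p]) => [/forall_inP QtoP |].
  exists v => //; rewrite disjoint_sym in PQ.
  apply: card_nbhd_le_cut PQ vQ _ _ _ _; first by rewrite h_irr.
  - by move=> z /(NPQ v vC); rewrite setUC.
  - by move=> p /QtoP/exists_inP.
  by move=> q p qQ pP hqp; rewrite setUC cutX // h_sym.
case/forall_inPn => b bQ /exists_inPn noPb; have bC : b \in C by case/setDP: bQ.
case: (diam a b (PC a aP) bC) => [ab | hab | [z haz hzb]].
- by move: bQ; rewrite -ab inE aP.
- by move: (noQa b bQ); rewrite hab.
case: (boolP (z \in P)) => zP.
  by move: (noPb z zP); rewrite h_sym hzb.
have zQ : z \in Q by rewrite inE zP (clC _ _ (PC a aP) haz).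
by move: (noQa z zQ); rewrite haz.
Qed.

End EdgeCuts.

Section Separators.
Variables (T : finType) (g : rel T).
Implicit Types (S : {set T}).

Lemma vsep_card S : vsep g S -> #|S|.+2 <= #|T|.
Proof.
case=> u [v [uS vS nuv]]; have uv : u != v by apply: contraNneq nuv => ->.
have: S \subset ~: [set u; v].
  by apply/subsetP => y yS; rewrite !inE negb_or; apply/andP; split;
    apply: contraTneq yS => ->.
by move/subset_leq_card; have := cardsC [set u; v]; rewrite cards2 uv; lia.
Qed.

Lemma vsep_minimal S : vsep g S -> exists2 S0, minimal_vsep g S0 & #|S0| <= #|S|.
Proof.
elim: {S}_.+1 {-2}S (ltnSn #|S|) => // n IH S ltSn sepS.
case: (classic (forall S', S' \proper S -> ~ vsep g S')) => [minS | ].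
  by exists S => //; split.
move=> /not_all_ex_not[S1 nS1]; have ltS1S := not_imply_elim _ _ nS1.
have sepS1 := NNPP _ (not_imply_elim2 _ _ nS1).
have [S0 minS0 leS0] := IH S1 (leq_trans (proper_card ltS1S) ltSn) sepS1.
by exists S0 => //; apply: leq_trans leS0 (ltnW (proper_card ltS1S)).
Qed.

Lemma k_connected_vsep k S : k_connected g k -> vsep g S -> k <= #|S|.
Proof.
case=> _ [S1 [[_ minS1] <-]] /vsep_minimal[S0 /minS1].
exact: leq_trans.
Qed.

Lemma k_connected_card k : k_connected g k -> k.+2 <= #|T|.
Proof. by case=> _ [S [[[sepS _] _] <-]]; apply: vsep_card. Qed.

End Separators.

Lemma sum_card_subsets_le (T : finType) (Pi F : {set {set T}}) (c : pred {set T}) :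
  trivIset Pi -> set0 \notin F ->
  \sum_(A in Pi | c A) #|[set f in F | f \subset A]| <= #|F|.
Proof.
move=> /trivIsetP tiPi F0.
have cardE (A : {set T}) : #|[set f in F | f \subset A]| = \sum_(f in F) (f \subset A).
  rewrite -sum1_card big_mkcond [RHS]big_mkcond /=; apply: eq_bigr => f _.
  by rewrite inE; case: (f \in F); case: (f \subset A).
rewrite (eq_bigr _ (fun A _ => cardE A)) exchange_big /= -sum1_card.
apply: leq_sum => f fF; have /set0Pn[z zf] : f != set0 by apply: contraNneq F0 => <-.
case: (pickP [pred A | [&& A \in Pi, c A & f \subset A]]) => [A0 | noA]; last first.
  by rewrite big1 // => A /andP[APi cA]; move: (noA A); rewrite /= APi cA /= => ->.
case/and3P=> A0Pi cA0 fA0; rewrite (bigD1 A0) /=; last by rewrite A0Pi cA0.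
rewrite fA0 big1 // => A /andP[/andP[APi _] AA0]; case fA: (f \subset A) => //.
have /disjointFr/(_ (subsetP fA z zf)) := tiPi A A0 APi A0Pi AA0.
by rewrite (subsetP fA0 z zf).
Qed.

Section Cocomponents.
Variables (T : finType) (e : rel T).
Hypothesis e_sym : symmetric e.
Implicit Types (C : {set T}).

Lemma mem_cocomps C x y :
  C \in cocomps e -> x \in C -> (y \in C) = connect (compl e) x y.
Proof.
case/imsetP=> x0 _ -> x0x; rewrite !inE in x0x *.
by rewrite (same_connect (sym_connect_sym (compl_sym e_sym)) x0x).
Qed.

Lemma trivIset_cocomps : trivIset (cocomps e).
Proof.
apply/trivIsetP => A B Acc Bcc; rewrite -setI_eq0.
apply: contraNT => /set0Pn[z /setIP[zA zB]]; apply/eqP/setP => y.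
by rewrite (mem_cocomps _ Acc zA) (mem_cocomps _ Bcc zB).
Qed.

End Cocomponents.

Section Augmentation.
Variables (T : finType) (e : rel T) (F : {set {set T}}).
Hypotheses (e_sym : symmetric e) (e_irr : irreflexive e) (e_cog : cograph e).
Hypothesis F_compl : compl_edges e F.

Local Notation e' := (gunion e F).

Lemma gunion_sym : symmetric e'.
Proof. by move=> x y; rewrite /gunion e_sym setUC. Qed.

Lemma gunion_irr : irreflexive e'.
Proof.
move=> x; rewrite /gunion e_irr setUid /=; apply/negP => /F_compl[a [b [xab]]].
have ax : a = x by apply/set1P; rewrite xab set21.
have bx : b = x by apply/set1P; rewrite xab set22.
by rewrite ax bx compl_irr.
Qed.

Lemma set0_notin_compl_edges : set0 \notin F.
Proof. by apply/negP => /F_compl[a [b [/setP/(_ a)]]]; rewrite set21 inE. Qed.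

Lemma compl_gunion x y : compl e' x y -> compl e x y.
Proof. by rewrite /compl /gunion negb_or => /andP[-> /andP[-> _]]. Qed.

Lemma compl_edge_added x y : compl e x y -> ~~ compl e' x y -> [set x; y] \in F.
Proof. by rewrite /compl /gunion => /andP[-> /negbTE->] /=; rewrite negbK. Qed.

Lemma cocomp_codegree_le_edges C :
  cograph e' -> ~ vsep e' (~: C) -> C \in cocomps e -> 1 < #|C| ->
  exists2 y, y \in C & #|cnbr e y| <= #|[set f in F | f \subset C]|.
Proof.
move=> e'_cog nsepC Ccc C2.
have /card_gt0P[u uC] : 0 < #|C| by apply: ltnW.
have clC y z : y \in C -> compl e y z -> z \in C.
  by move=> yC; rewrite (mem_cocomps e_sym _ Ccc yC); apply: connect1.
have e'C : connected_on e' C.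
  move=> p q pC qC; apply: contraT => npq; case: nsepC.
  by exists p, q; rewrite !inE !negbK pC qC.
pose D := [set y in C | connect (compl e') u y].
have DC : D \subset C by apply/subsetP => y; rewrite inE => /andP[].
have uD : u \in D by rewrite inE uC connect0.
have /set0Pn[v vQ] : C :\: D != set0.
  apply: contraTneq C2 => Q0; rewrite -leqNgt.
  apply: (cograph_connected_on_compl_le1 gunion_sym gunion_irr e'_cog e'C).
  have reach y : y \in C -> connect (del (compl e') (~: C)) u y.
    move=> yC; apply: connect_induced uC _ => [a b aC /compl_gunion|]; first exact: clC.
    have: y \notin C :\: D by rewrite Q0 inE.
    by rewrite !inE yC andbT negbK.
  move=> p q pC qC; apply: connect_trans (reach q qC).
  by rewrite (sym_connect_sym (del_sym _ (compl_sym gunion_sym))) reach.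
apply: (cut_ge_degree_diam2 (compl_sym e_sym) (@compl_irr _ e) clC _ DC uD vQ).
  move=> a b aC bC; apply: (cograph_connect_le2 (compl_sym e_sym) (@compl_irr _ e)).
    exact: cograph_compl.
  by rewrite -(mem_cocomps e_sym _ Ccc aC).
move=> p q pD /setDP[qC qD] cpq; rewrite inE subUset !sub1set (subsetP DC p pD) qC /= andbT.
apply: compl_edge_added cpq _; apply: contra qD => c'pq.
by move: pD; rewrite !inE qC => /andP[_ up]; apply: connect_trans up (connect1 c'pq).
Qed.

End Augmentation.

Theorem lemma4 (T : finType) (e : rel T)
  (e_sym : symmetric e) (e_irr : irreflexive e) (k : nat)
  (Hcog : cograph e) (Hk : k_connected e k)
  (x : {set T} -> T)
  (Hx : forall C, C \in cocomps e -> #|C| = #|T| - k ->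
          x C \in C /\ (forall y, y \in C -> #|cnbr e (x C)| <= #|cnbr e y|)) :
  forall F : {set {set T}}, compl_edges e F ->
    cograph (gunion e F) -> k_connected (gunion e F) k.+1 ->
    \sum_(C in cocomps e | #|C| == #|T| - k) #|cnbr e (x C)| <= #|F|.
Proof.
move=> F F_compl F_cog F_conn.
have nT := k_connected_card Hk.
apply: leq_trans (sum_card_subsets_le _ (trivIset_cocomps e_sym)
  (set0_notin_compl_edges F_compl)).
apply: leq_sum => C /andP[Ccc /eqP cardC].
have C2 : 1 < #|C| by rewrite cardC; lia.
have nsepC : ~ vsep (gunion e F) (~: C).
  by move/(k_connected_vsep F_conn); have := cardsC C; lia.
have [y yC le_y] := cocomp_codegree_le_edges e_sym e_irr Hcog F_compl F_cog nsepC Ccc C2.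
by have [_ xmin] := Hx C Ccc cardC; apply: leq_trans (xmin y yC) le_y.
Qed.
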